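(* If $\dot G\in\mathcal C_1\cup\mathcal C_4\cup\mathcal C_5$ is a connected, non-complete, $5$-regular and $1$ net-regular SRSG with parameters $(n,5,a,b,c)$, then $(a,b)\neq(-2,1)$ and $(a,b)\neq(-2,-1)$.
   Context: A signed graph $\dot G=(G,\sigma)$ is a simple graph $G$ with $\sigma:E(G)\to\{\pm1\}$; adjacency matrix $A_{\dot G}$ has entries $\sigma(v_iv_j)$ for adjacent vertices and $0$ otherwise. Degree and connectedness refer to $G$; net-degree is $d^+(v)-d^-(v)$; $\rho$ net-regular means all net-degrees equal $\rho$. $\dot G$ on $n$ vertices is an SRSG if it is neither homogeneous complete nor edgeless and there are $r\in\mathbb N$, $a,b,c\in\mathbb Z$ with $(A^2_{\dot G})_{ii}=r$, $(A^2_{\dot G})_{ij}=a$ for positive edges, $b$ for negative edges, $c$ for distinct non-adjacent pairs; parameters $(n,r,a,b,c)$. Classes: $\mathcal C_1$: $a=-b$ and (complete, or non-complete with $c\neq0$); $\mathcal C_4$: $a\ne-b$, non-complete, $c=0$; $\mathcal C_5$: $a\neq-b$, non-complete, $c\notin\{0,\frac{a+b}{2}\}$. *)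

From mathcomp Require Import all_boot all_order all_algebra.
Set Implicit Arguments. Unset Strict Implicit. Unset Printing Implicit Defensive.
Import Order.TTheory GRing.Theory Num.Theory.
Local Open Scope ring_scope.

(* A signed graph on a finite vertex type V: a simple graph given by an
   adjacency relation e (symmetric, irreflexive) together with a signature
   s : V -> V -> bool (true = positive edge, false = negative edge),
   symmetric on edges. *)
Definition signed_graph (V : finType) (e : rel V) (s : V -> V -> bool) : Prop :=
  symmetric e /\ irreflexive e /\ (forall x y, e x y -> s x y = s y x).

Definition sadj (V : finType) (e : rel V) (s : V -> V -> bool) (x y : V) : int :=
  if e x y then (if s x y then 1 else -1) else 0.

Definition sadj2 (V : finType) (e : rel V) (s : V -> V -> bool) (x y : V) : int :=
  \sum_(z : V) sadj e s x z * sadj e s z y.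

Definition sdeg (V : finType) (e : rel V) (x : V) : nat := #|[set y | e x y]|.
Definition pdeg (V : finType) (e : rel V) (s : V -> V -> bool) (x : V) : nat :=
  #|[set y | e x y && s x y]|.
Definition ndeg (V : finType) (e : rel V) (s : V -> V -> bool) (x : V) : nat :=
  #|[set y | e x y && ~~ s x y]|.
Definition netdeg (V : finType) (e : rel V) (s : V -> V -> bool) (x : V) : int :=
  (pdeg e s x)%:Z - (ndeg e s x)%:Z.

Definition regular (V : finType) (e : rel V) (r : nat) : Prop :=
  forall x, sdeg e x = r.
Definition net_regular (V : finType) (e : rel V) (s : V -> V -> bool) (rho : int) : Prop :=
  forall x, netdeg e s x = rho.

Definition connected_graph (V : finType) (e : rel V) : Prop :=
  forall x y, connect e x y.
Definition complete_graph (V : finType) (e : rel V) : Prop :=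
  forall x y, x != y -> e x y.
Definition edgeless (V : finType) (e : rel V) : Prop :=
  forall x y, ~~ e x y.
Definition homogeneous (V : finType) (e : rel V) (s : V -> V -> bool) : Prop :=
  (forall x y, e x y -> s x y) \/ (forall x y, e x y -> ~~ s x y).
Definition homogeneous_complete (V : finType) (e : rel V) (s : V -> V -> bool) : Prop :=
  complete_graph e /\ homogeneous e s.

Definition SRSG (V : finType) (e : rel V) (s : V -> V -> bool)
    (n r : nat) (a b c : int) : Prop :=
  signed_graph e s /\ #|V| = n /\
  ~ homogeneous_complete e s /\ ~ edgeless e /\
  (forall x, sadj2 e s x x = r%:Z) /\
  (forall x y, e x y -> s x y -> sadj2 e s x y = a) /\
  (forall x y, e x y -> ~~ s x y -> sadj2 e s x y = b) /\
  (forall x y, x != y -> ~~ e x y -> sadj2 e s x y = c).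

Definition classC1 (V : finType) (e : rel V) (a b c : int) : Prop :=
  a = - b /\ (complete_graph e \/ (~ complete_graph e /\ c <> 0)).
Definition classC4 (V : finType) (e : rel V) (a b c : int) : Prop :=
  a <> - b /\ ~ complete_graph e /\ c = 0.
(* c <> (a+b)/2 is stated as 2c <> a+b to stay in the integers *)
Definition classC5 (V : finType) (e : rel V) (a b c : int) : Prop :=
  a <> - b /\ ~ complete_graph e /\ c <> 0 /\ c *+ 2 <> a + b.

From mathcomp Require Import all_boot all_order all_algebra.
From mathcomp Require Import zify.
(* A discharging argument.  Give each ordered triangle (x, y, z) a charge that
   depends only on the signs of its edges, chosen so that the charges of the
   three cyclic rotations of a triangle cancel: the total charge is 0.  In a
   5-regular graph of net-degree 1 every vertex has 3 positive and 2 negative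
   neighbours; counting the common neighbours of an edge xy according to the
   signs of xz and yz then shows that, when a <= -2 and b <= 1, the triangles
   through xy carry charge at most -2 A_xy.  Summing over y, every vertex
   carries charge at most -2 times its net-degree, i.e. -2, so the total charge
   is negative as soon as there is a vertex. *)

Set Implicit Arguments. Unset Strict Implicit.
Import Order.TTheory GRing.Theory Num.Theory.
Local Open Scope ring_scope.

Lemma card_set_sumz (T : finType) (P : pred T) :
  #|[set x | P x]|%:Z = \sum_x (P x)%:R.
Proof.
rewrite -sum1_card -natz natr_sum big_mkcond /=; apply: eq_bigr => x _.
by rewrite inE; case: (P x).
Qed.

Lemma sum_cyclic_eq0 (T : finType) (f : T -> T -> T -> int) :
  (forall x y z, f x y z + f y z x + f z x y = 0) ->
  \sum_x \sum_y \sum_z f x y z = 0.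
Proof.
move=> f_cyc; set S := \sum_x _.
have rot1 : \sum_x \sum_y \sum_z f y z x = S.
  by rewrite exchange_big; apply: eq_bigr => y _; rewrite exchange_big.
have rot2 : \sum_x \sum_y \sum_z f z x y = S.
  by under eq_bigr => x _ do rewrite exchange_big; rewrite exchange_big.
have : S + S + S = 0.
  rewrite -{2}rot1 -{2}rot2 -!big_split; apply: big1 => x _.
  rewrite -!big_split; apply: big1 => y _; rewrite -!big_split.
  by apply: big1 => z _; apply: f_cyc.
lia.
Qed.

Section SignedGraph.
Variables (V : finType) (e : rel V) (s : V -> V -> bool).

Definition ncommon (x y : V) (p q : bool) : nat :=
  #|[set z | [&& e x z, e y z, s x z == p & s y z == q]]|.

Lemma ncommonC x y p q : ncommon x y p q = ncommon y x q p.
Proof.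
apply: eq_card => z; rewrite !inE.
by case: (e x z); case: (e y z); rewrite //= andbC.
Qed.

Lemma sum_sadj x : \sum_y sadj e s x y = netdeg e s x.
Proof.
rewrite /netdeg /pdeg /ndeg !card_set_sumz -sumrN -big_split.
by apply: eq_bigr => y _; rewrite /sadj; case: (e x y); case: (s x y).
Qed.

Lemma sdeg_pdeg_ndeg x : sdeg e x = (pdeg e s x + ndeg e s x)%N.
Proof.
rewrite /sdeg /pdeg /ndeg -(cardsID [set y | s x y] [set y | e x y]).
by congr addn; apply: eq_card => y; rewrite !inE andbC.
Qed.

Hypotheses (e_sym : symmetric e) (e_irr : irreflexive e)
  (s_sym : forall x y, e x y -> s x y = s y x).

Lemma sadj2_ncommon x y :
  sadj2 e s x y = (ncommon x y true true)%:Z - (ncommon x y true false)%:Z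
                  - (ncommon x y false true)%:Z + (ncommon x y false false)%:Z.
Proof.
rewrite /sadj2 /ncommon !card_set_sumz -!sumrN -!big_split /=.
apply: eq_bigr => z _; rewrite /sadj (e_sym z y).
case Eyz: (e y z); last by rewrite mulr0 /= !andbF.
rewrite -(s_sym Eyz).
by case: (e x z); case: (s x z); case: (s y z).
Qed.

Lemma ncommon_le_deg x y p :
  (ncommon x y p true)%:Z + (ncommon x y p false)%:Z + (e x y && (s x y == p))%:R
    <= #|[set z | e x z && (s x z == p)]|%:Z.
Proof.
have -> : (e x y && (s x y == p))%:R
           = \sum_z ((z == y) && e x y && (s x y == p))%:R :> int.
  by rewrite (bigD1 y) //= eqxx big1 ?addr0 // => z /negbTE ->.
rewrite /ncommon !card_set_sumz -!big_split /=; apply: ler_sum => z _.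
case: (z =P y) => [->|_]; first by rewrite e_irr /= !andbF !add0r.
by case: (e x z); case: (e y z); case: (s x z == p); case: (s y z).
Qed.

(* The arguments are the signs of xy, xz and yz; rotating (x, y, z) rotates
   them to (yz, yx, zx) and (zx, zy, xy), and the three weights sum to 0. *)
Definition triangle_weight (p q r : bool) : int :=
  match p, q, r with
  | true, true, true => 0 | true, true, false => -1
  | true, false, true => -1 | true, false, false => 4
  | false, true, true => 2 | false, true, false => -2
  | false, false, true => -2 | false, false, false => 0
  end.

Definition charge (x y z : V) : int :=
  if [&& e x y, e x z & e y z] then triangle_weight (s x y) (s x z) (s y z) else 0.

Lemma charge_cycle x y z : charge x y z + charge y z x + charge z x y = 0.
Proof.
rewrite /charge (e_sym y x) (e_sym z x) (e_sym z y).
case Exy: (e x y); case Exz: (e x z); case Eyz: (e y z) => //=.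
rewrite -(s_sym Exy) -(s_sym Exz) -(s_sym Eyz).
by case: (s x y); case: (s x z); case: (s y z).
Qed.

Lemma sum_charge_edge x y : e x y ->
  \sum_z charge x y z =
    if s x y then 4 * (ncommon x y false false)%:Z - (ncommon x y true false)%:Z
                  - (ncommon x y false true)%:Z
    else 2 * ((ncommon x y true true)%:Z - (ncommon x y true false)%:Z
              - (ncommon x y false true)%:Z).
Proof.
move=> Exy; rewrite /ncommon !card_set_sumz.
case Sxy: (s x y); rewrite ?mulr_sumr -!sumrN -!big_split ?mulr_sumr /=;
  apply: eq_bigr => z _; rewrite /charge Exy Sxy /=;
  by case: (e x z); case: (s x z); case: (e y z); case: (s y z).
Qed.

Lemma sum_charge_nonedge x y : ~~ e x y -> \sum_z charge x y z = 0.
Proof. by move=> /negbTE Nxy; apply: big1 => z _; rewrite /charge Nxy. Qed.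

End SignedGraph.

Section Regular5NetRegular1.
Variables (V : finType) (e : rel V) (s : V -> V -> bool) (a b : int).
Hypotheses (e_sym : symmetric e) (e_irr : irreflexive e)
  (s_sym : forall x y, e x y -> s x y = s y x)
  (e_reg : regular e 5) (s_net : net_regular e s 1)
  (pos_edge : forall x y, e x y -> s x y -> sadj2 e s x y = a)
  (neg_edge : forall x y, e x y -> ~~ s x y -> sadj2 e s x y = b)
  (a_le : a <= -2) (b_le : b <= 1).

Lemma card_signed_nbrs x p :
  #|[set z | e x z && (s x z == p)]|%:Z = if p then 3 else 2.
Proof.
have := e_reg x; have := s_net x; rewrite (sdeg_pdeg_ndeg e s) /netdeg /pdeg /ndeg.
case: p.
- have -> : [set z | e x z && (s x z == true)] = [set z | e x z && s x z].
    by apply/setP => z; rewrite !inE eqb_id.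
  lia.
- have -> : [set z | e x z && (s x z == false)] = [set z | e x z && ~~ s x z].
    by apply/setP => z; rewrite !inE eqbF_neg.
  lia.
Qed.

Lemma sum_charge_le_sadj x y : \sum_z charge e s x y z <= -2 * sadj e s x y.
Proof.
case Exy: (e x y); last by rewrite sum_charge_nonedge ?Exy // /sadj Exy mulr0.
rewrite sum_charge_edge // /sadj Exy.
have := ncommon_le_deg s e_irr x y true; have := ncommon_le_deg s e_irr x y false.
have := ncommon_le_deg s e_irr y x true; have := ncommon_le_deg s e_irr y x false.
rewrite !card_signed_nbrs (e_sym y x) Exy -(s_sym Exy) !(ncommonC e s y x).
case Sxy: (s x y).
(* On a positive edge the degree bounds and a <= -2 force the counts of
   (+,+) and (-,-) common neighbours to vanish. *)
- by have := pos_edge Exy Sxy; rewrite (sadj2_ncommon e_sym s_sym); lia.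
- by have := neg_edge Exy (negbT Sxy); rewrite (sadj2_ncommon e_sym s_sym); lia.
Qed.

Lemma sum_charge_vertex x : \sum_y \sum_z charge e s x y z <= -2.
Proof.
apply: le_trans (ler_sum _ (fun y _ => sum_charge_le_sadj x y)) _.
by rewrite -mulr_sumr sum_sadj s_net mulr1.
Qed.

Lemma card_vertices_eq0 : #|V| = 0%N.
Proof.
have : \sum_x \sum_y \sum_z charge e s x y z <= \sum_(x : V) (-2 : int).
  by apply: ler_sum => x _; apply: sum_charge_vertex.
rewrite sum_cyclic_eq0 ?sumr_const; last exact: charge_cycle.
by rewrite nmulrn_rge0 // => /eqP.
Qed.

End Regular5NetRegular1.

Theorem lemma3p10 (V : finType) (e : rel V) (s : V -> V -> bool)
    (n : nat) (a b c : int) :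
  SRSG e s n 5 a b c ->
  classC1 e a b c \/ classC4 e a b c \/ classC5 e a b c ->
  connected_graph e -> ~ complete_graph e ->
  regular e 5 -> net_regular e s 1 ->
  (a, b) <> (-2, 1) /\ (a, b) <> (-2, -1).
Proof.
move=> [[e_sym [e_irr s_sym]] [_ [_ [not_edgeless [_ [pos_edge [neg_edge _]]]]]]].
move=> _ _ _ e_reg s_net.
have no_vertex (x : V) : a <= -2 -> b <= 1 -> False.
  move=> a_le b_le; have V0 := card_vertices_eq0 e_sym e_irr s_sym e_reg s_net
    pos_edge neg_edge a_le b_le.
  by have := card0_eq V0 x; rewrite !inE.
by split=> -[a_eq b_eq]; apply: not_edgeless => x y;
  case: (no_vertex x); rewrite ?a_eq ?b_eq.
Qed.
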